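(* For any $n$-agent rank-based mechanism with allocation rule $x$ and any $\delta<1/n$: (1) $\sup_{q<\delta}x'(q)\le e\,x'(\delta)$, and (2) $\sup_{q>1-\delta}x'(q)\le e\,x'(1-\delta)$.
   Context: For $k\in\{1,\dots,n-1\}$ the $k$-highest-bids-win allocation rule in quantile space is $x_k(q)=\sum_{i=0}^{k-1}\binom{n-1}{i}q^{n-1-i}(1-q)^i$, with derivative $x_k'(q)=(n-1)\binom{n-2}{k-1}q^{n-k-1}(1-q)^{k-1}$; $x_0\equiv 0$, $x_n\equiv 1$. A rank-based mechanism with position weights $1\ge w_1\ge\cdots\ge w_n\ge 0$ ($w_{n+1}:=0$) has allocation rule $x(q)=\sum_{k=1}^{n}(w_k-w_{k+1})x_k(q)$, $q\in[0,1]$. *)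

From Stdlib Require Import Reals.
Open Scope R_scope.

(* k-highest-bids-win allocation rule in quantile space, n agents:
   x_0 = 0, x_n = 1, and for 1 <= k <= n-1
   x_k(q) = sum_{i=0}^{k-1} C(n-1,i) q^(n-1-i) (1-q)^i. *)
Definition xk (n k : nat) (q : R) : R :=
  if Nat.eqb k 0 then 0
  else if Nat.eqb k n then 1
  else sum_f_R0 (fun i => C (n - 1) i * q ^ (n - 1 - i) * (1 - q) ^ i) (k - 1).

Definition xk' (n k : nat) (q : R) : R :=
  if Nat.eqb k 0 then 0
  else if Nat.eqb k n then 0
  else INR (n - 1) * C (n - 2) (k - 1) * q ^ (n - k - 1) * (1 - q) ^ (k - 1).

Definition wext (n : nat) (w : nat -> R) (k : nat) : R :=
  if Nat.ltb n k then 0 else w k.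

(* Rank-based mechanism allocation rule x(q) = sum_{k=1}^n (w_k - w_{k+1}) x_k(q). *)
Definition alloc (n : nat) (w : nat -> R) (q : R) : R :=
  sum_f_R0 (fun j => (wext n w (S j) - wext n w (S (S j))) * xk n (S j) q) (n - 1).

Definition alloc' (n : nat) (w : nat -> R) (q : R) : R :=
  sum_f_R0 (fun j => (wext n w (S j) - wext n w (S (S j))) * xk' n (S j) q) (n - 1).

Definition valid_weights (n : nat) (w : nat -> R) : Prop :=
  w 1%nat <= 1 /\
  (forall k : nat, (1 <= k)%nat -> (k < n)%nat -> w (S k) <= w k) /\
  0 <= w n.

(* Each x_k' is a monomial K q^a (1-q)^b with K >= 0 and a + b = n - 2.
   On [0, delta) the factor q^a is at most delta^a, and (1-q)^b <= 1 <= e (1-delta)^b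
   because (1 - delta)^-b <= exp (b delta / (1 - delta)) <= e when (b + 1) delta < 1.
   The region (1-delta, 1] is the mirror image under q |-> 1 - q, and the claim for
   x' = sum (w_k - w_{k+1}) x_k' follows since the weights are nonincreasing. *)

From Stdlib Require Import Reals Lra Lia.
Open Scope R_scope.

Lemma exp_INR_mul (m : nat) (y : R) : exp (INR m * y) = exp y ^ m.
Proof.
  induction m as [|m IH].
  - simpl. rewrite Rmult_0_l. exact exp_0.
  - rewrite S_INR, Rmult_plus_distr_r, Rmult_1_l, exp_plus, IH. simpl. ring.
Qed.

Lemma one_le_exp1_mul_pow_one_sub (d : R) (m : nat) :
  0 < d -> INR (S m) * d < 1 -> 1 <= exp 1 * (1 - d) ^ m.
Proof.
  intros Hd Hmd. rewrite S_INR in Hmd.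
  pose proof (pos_INR m) as Hm.
  assert (Hd1 : 0 < 1 - d) by nra.
  set (y := d / (1 - d)).
  assert (Hstep : 1 <= (1 - d) * exp y).
  { assert (Hy : (1 - d) * (1 + y) = 1) by (unfold y; field; lra).
    pose proof (exp_ineq1_le y). nra. }
  assert (Hpow : 1 <= (1 - d) ^ m * exp (INR m * y)).
  { rewrite exp_INR_mul, <- Rpow_mult_distr. now apply pow_R1_Rle. }
  (* m d <= 1 - d, i.e. m y <= 1 *)
  assert (Hexp : exp (INR m * y) <= exp 1).
  { apply Rlt_le, exp_increasing.
    unfold y. apply Rmult_lt_reg_r with (1 - d); [lra|].
    field_simplify; lra. }
  assert (0 <= (1 - d) ^ m) by (apply pow_le; lra).
  nra.
Qed.

Lemma monomial_le_exp1_mul (K q d : R) (a b : nat) :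
  0 <= K -> 0 <= q -> q < d -> INR (S b) * d < 1 ->
  K * q ^ a * (1 - q) ^ b <= exp 1 * (K * d ^ a * (1 - d) ^ b).
Proof.
  intros HK Hq Hqd Hbd.
  assert (Hd : 0 < d) by lra.
  assert (Hd1 : d < 1).
  { rewrite S_INR in Hbd. pose proof (Rmult_le_pos _ _ (pos_INR b) (Rlt_le _ _ Hd)). lra. }
  assert (q ^ a <= d ^ a) by (apply pow_incr; lra).
  assert ((1 - q) ^ b <= 1)
    by (apply Rle_trans with (1 ^ b); [apply pow_incr; lra | rewrite pow1; lra]).
  pose proof (one_le_exp1_mul_pow_one_sub d b Hd Hbd).
  assert (0 <= q ^ a) by (apply pow_le; lra).
  assert (0 <= (1 - q) ^ b) by (apply pow_le; lra).
  assert (K * q ^ a <= K * d ^ a) by (apply Rmult_le_compat_l; assumption).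
  assert (0 <= K * q ^ a) by (apply Rmult_le_pos; assumption).
  nra.
Qed.

Lemma C_ge0 (m k : nat) : 0 <= C m k.
Proof.
  unfold C. apply Rmult_le_pos; [apply pos_INR|].
  apply Rlt_le, Rinv_0_lt_compat, Rmult_lt_0_compat; apply lt_0_INR, Factorial.lt_O_fact.
Qed.

Lemma INR_mul_lt1_le (m n : nat) (d : R) :
  (m <= n)%nat -> 0 <= d -> INR n * d < 1 -> INR m * d < 1.
Proof. intros Hmn Hd Hn. pose proof (le_INR m n Hmn). nra. Qed.

Section DerivativeBounds.

Variables (n k : nat) (d : R).
Hypotheses (Hk : (k <= n)%nat) (Hd : 0 < d) (Hnd : INR n * d < 1).

Let K := INR (n - 1) * C (n - 2) (k - 1).

Let K_ge0 : 0 <= K.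
Proof. apply Rmult_le_pos; [apply pos_INR | apply C_ge0]. Qed.

Lemma xk'_le_exp1_mul_left (q : R) :
  0 <= q -> q < d -> xk' n k q <= exp 1 * xk' n k d.
Proof.
  intros Hq Hqd. unfold xk'.
  destruct (Nat.eqb_spec k 0); [lra|].
  destruct (Nat.eqb_spec k n); [lra|].
  fold K.
  apply monomial_le_exp1_mul; [exact K_ge0 | lra | lra |].
  apply INR_mul_lt1_le with n; [lia | lra | exact Hnd].
Qed.

Lemma xk'_le_exp1_mul_right (q : R) :
  1 - d < q -> q <= 1 -> xk' n k q <= exp 1 * xk' n k (1 - d).
Proof.
  intros Hq Hq1. unfold xk'.
  destruct (Nat.eqb_spec k 0); [lra|].
  destruct (Nat.eqb_spec k n); [lra|].
  fold K.
  replace q with (1 - (1 - q)) at 1 by ring.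
  replace (1 - (1 - d)) with d by ring.
  replace (K * (1 - (1 - q)) ^ (n - k - 1) * (1 - q) ^ (k - 1))
    with (K * (1 - q) ^ (k - 1) * (1 - (1 - q)) ^ (n - k - 1)) by ring.
  replace (K * (1 - d) ^ (n - k - 1) * d ^ (k - 1))
    with (K * d ^ (k - 1) * (1 - d) ^ (n - k - 1)) by ring.
  apply monomial_le_exp1_mul; [exact K_ge0 | lra | lra |].
  apply INR_mul_lt1_le with n; [lia | lra | exact Hnd].
Qed.

End DerivativeBounds.

Lemma wext_diff_ge0 (n : nat) (w : nat -> R) (j : nat) :
  valid_weights n w -> (j < n)%nat -> 0 <= wext n w (S j) - wext n w (S (S j)).
Proof.
  intros [_ [Hmono Hwn]] Hj. unfold wext.
  destruct (Nat.ltb_spec n (S j)); [lia|].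
  destruct (Nat.ltb_spec n (S (S j))).
  - replace (S j) with n by lia. lra.
  - assert (w (S (S j)) <= w (S j)) by (apply Hmono; lia). lra.
Qed.

Lemma sum_weighted_le (c f g : nat -> R) (N : nat) (M : R) :
  (forall j, (j <= N)%nat -> 0 <= c j) ->
  (forall j, (j <= N)%nat -> f j <= M * g j) ->
  sum_f_R0 (fun j => c j * f j) N <= M * sum_f_R0 (fun j => c j * g j) N.
Proof.
  intros Hc Hfg. rewrite scal_sum. apply sum_Rle. intros j Hj.
  pose proof (Hc j Hj). pose proof (Hfg j Hj). nra.
Qed.

Theorem mainTheorem7 (n : nat) (w : nat -> R) (delta : R)
  (hn : (1 <= n)%nat) (hw : valid_weights n w)
  (hd0 : 0 < delta) (hd1 : delta < 1 / INR n) :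
  (forall q : R, 0 <= q -> q < delta -> alloc' n w q <= exp 1 * alloc' n w delta) /\
  (forall q : R, 1 - delta < q -> q <= 1 -> alloc' n w q <= exp 1 * alloc' n w (1 - delta)).
Proof.
  assert (Hnd : INR n * delta < 1).
  { assert (Hn0 : 0 < INR n) by (apply lt_0_INR; lia).
    apply Rmult_lt_compat_l with (r := INR n) in hd1; [|exact Hn0].
    unfold Rdiv in hd1. rewrite Rmult_1_l, Rinv_r in hd1 by lra. exact hd1. }
  assert (Hc : forall j, (j <= n - 1)%nat -> 0 <= wext n w (S j) - wext n w (S (S j)))
    by (intros; apply wext_diff_ge0; [exact hw | lia]).
  split; intros q Hq Hq'; apply sum_weighted_le; auto; intros j Hj.
  - apply xk'_le_exp1_mul_left; auto; lia.
  - apply xk'_le_exp1_mul_right; auto; lia.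
Qed.
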